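(* Let $G$ be a finitely generated group. If $IP_{Rat}(G\rtimes\mathbb{Z})$ is decidable, then $GBrP_{Rat}(G)$ is decidable.
   Context: For $\phi\in\mathrm{Aut}(G)$, $G\rtimes_\phi\mathbb{Z}$ is the group generated by $G$ and $t$ with $t^{-1}at=\phi(a)$ for $a\in G$. A subset of a finitely generated group is rational if it is the image of a rational (regular) language over the generators and their inverses (given by a finite automaton). $IP_{Rat}(G\rtimes\mathbb{Z})$: given $\phi\in\mathrm{Aut}(G)$ and two rational subsets of $G\rtimes_\phi\mathbb{Z}$, decide whether they intersect. $GBrP_{Rat}(G)$: given a rational subset $K\subseteq G$, $\phi\in\mathrm{Aut}(G)$ and $x\in G$, decide whether there exists $k$ with $\phi^k(x)\in K$. *)

(* Decidability is formalised through an
   explicit Turing-complete model of computation (Minsky register machines)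
   acting on the standard computable MathComp encoding [pickle] of instances. *)
From mathcomp Require Import all_boot ssralg ssrint.
Set Implicit Arguments. Unset Strict Implicit. Unset Printing Implicit Defensive.

Inductive instr : Type :=
| INC (r : nat)
| DEC (r : nat) (j : nat).

Definition program := seq instr.
Definition mstate : Type := (nat * (nat -> nat))%type.

Definition upd (R : nat -> nat) (r v : nat) : nat -> nat :=
  fun k => if k == r then v else R k.

Definition step (p : program) (s : mstate) : mstate :=
  let: (pc, R) := s in
  match nth (INC 0) p pc with
  | INC r => (pc.+1, upd R r (R r).+1)
  | DEC r j => match R r with
               | k.+1 => (pc.+1, upd R r k)
               | 0 => (j, R)
               end
  end.

Fixpoint exec (p : program) (fuel : nat) (s : mstate) : mstate :=
  match fuel with
  | 0 => s
  | f.+1 => if s.1 < size p then exec p f (step p s) else s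
  end.

Definition init_regs (n : nat) : nat -> nat := fun r => if r == 0 then n else 0.

Definition halts_with (p : program) (n out : nat) : Prop :=
  exists fuel, let s := exec p fuel (0, init_regs n) in
               size p <= s.1 /\ s.2 0 = out.

Definition decidable_on (I : countType) (valid : I -> Prop) (P : I -> Prop) : Prop :=
  exists p : program, forall x, valid x ->
    exists b : bool, halts_with p (pickle x) (nat_of_bool b) /\ (b <-> P x).

Record group_str (T : Type) := GroupStr {
  gmul : T -> T -> T;
  gone : T;
  ginv : T -> T;
  gmulA : forall a b c, gmul a (gmul b c) = gmul (gmul a b) c;
  gmul1g : forall a, gmul gone a = a;
  gmulg1 : forall a, gmul a gone = a;
  gmulVg : forall a, gmul (ginv a) a = gone;
  gmulgV : forall a, gmul a (ginv a) = gone
}.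

Definition is_aut (T : Type) (G : group_str T) (f : T -> T) : Prop :=
  (forall a b, f (gmul G a b) = gmul G (f a) (f b)) /\ bijective f.

(* Words over the generators gens = [g_0;...;g_{n-1}] and their inverses:
   letter 2i stands for g_i and letter 2i+1 for g_i^{-1}. *)
Definition word := seq nat.

Definition letterG (T : Type) (G : group_str T) (gens : seq T) (x : nat) : T :=
  if odd x then ginv G (nth (gone G) gens x./2) else nth (gone G) gens x./2.

Definition evalG (T : Type) (G : group_str T) (gens : seq T) (w : word) : T :=
  foldl (fun a x => gmul G a (letterG G gens x)) (gone G) w.

Definition word_over (k : nat) (w : word) : bool := all (fun x => x < k) w.

Definition generates (T : Type) (G : group_str T) (gens : seq T) : Prop :=
  forall a : T, exists w, word_over (2 * size gens) w /\ evalG G gens w = a.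

(* An automaton is (initial state, final states, transitions (p,letter,q)). *)
Definition nfa := (nat * seq nat * seq (nat * nat * nat))%type.

Fixpoint run (trans : seq (nat * nat * nat)) (p : nat) (w : word) (q : nat) : Prop :=
  match w with
  | [::] => p = q
  | x :: w' => exists p', (p, x, p') \in trans /\ run trans p' w' q
  end.

Definition accepts (A : nfa) (w : word) : Prop :=
  exists2 q, q \in A.1.2 & run A.2 A.1.1 w q.

Definition nfa_over (k : nat) (A : nfa) : bool := all (fun e => e.1.2 < k) A.2.

Definition represents_aut (T : Type) (G : group_str T) (gens : seq T)
    (phiw : seq word) (f : T -> T) : Prop :=
  is_aut G f /\ size phiw = size gens /\
  forall i, i < size gens -> f (nth (gone G) gens i) = evalG G gens (nth [::] phiw i).

Definition valid_aut_data (T : Type) (G : group_str T) (gens : seq T) (phiw : seq word) : Prop :=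
  all (word_over (2 * size gens)) phiw /\ exists f, represents_aut G gens phiw f.

(* The semidirect product G x|_phi Z, with t^{-1} a t = phi(a).        *)
(* Elements are written in normal form t^m a (m : int, a : G).  Words  *)
(* use the letters of G (< 2n), letter 2n for t and 2n+1 for t^{-1}.   *)
(* sd_step x s s' : s' is the normal form of (s * letter x).           *)
(* t^m a t = t^(m+1) phi(a);  t^m a t^-1 = t^(m-1) phi^-1(a).          *)
Definition sd_step (T : Type) (G : group_str T) (gens : seq T) (f : T -> T)
    (x : nat) (s s' : int * T) : Prop :=
  let n := size gens in
  if x < 2 * n then s'.1 = s.1 /\ s'.2 = gmul G s.2 (letterG G gens x)
  else if x == 2 * n then s'.1 = (s.1 + 1)%R /\ s'.2 = f s.2
  else if x == (2 * n).+1 then s'.1 = (s.1 - 1)%R /\ f s'.2 = s.2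
  else False.

Fixpoint sd_run (T : Type) (G : group_str T) (gens : seq T) (f : T -> T)
    (w : word) (s s' : int * T) : Prop :=
  match w with
  | [::] => s' = s
  | x :: w' => exists s'', sd_step G gens f x s s'' /\ sd_run G gens f w' s'' s'
  end.

Definition sd_eval (T : Type) (G : group_str T) (gens : seq T) (f : T -> T)
    (w : word) (s : int * T) : Prop := sd_run G gens f w (0%R, gone G) s.

(* instance: (automorphism data, automaton 1, automaton 2)             *)
Definition IP_instance := (seq word * nfa * nfa)%type.

Definition IP_valid (T : Type) (G : group_str T) (gens : seq T) (x : IP_instance) : Prop :=
  valid_aut_data G gens x.1.1 /\
  nfa_over (2 * size gens).+2 x.1.2 /\ nfa_over (2 * size gens).+2 x.2.

Definition IP_answer (T : Type) (G : group_str T) (gens : seq T) (x : IP_instance) : Prop :=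
  exists f, represents_aut G gens x.1.1 f /\
    exists u v s, accepts x.1.2 u /\ accepts x.2 v /\
                  sd_eval G gens f u s /\ sd_eval G gens f v s.

Definition IP_Rat_SD_decidable (T : Type) (G : group_str T) (gens : seq T) : Prop :=
  decidable_on (IP_valid G gens) (IP_answer G gens).

(* instance: (automaton for K, automorphism data, word for x)          *)
Definition GBrP_instance := (nfa * seq word * word)%type.

Definition GBrP_valid (T : Type) (G : group_str T) (gens : seq T) (x : GBrP_instance) : Prop :=
  nfa_over (2 * size gens) x.1.1 /\ valid_aut_data G gens x.1.2 /\
  word_over (2 * size gens) x.2.

Definition GBrP_answer (T : Type) (G : group_str T) (gens : seq T) (x : GBrP_instance) : Prop :=
  exists f, represents_aut G gens x.1.2 f /\
    exists (k : nat) (w : word), accepts x.1.1 w /\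
      evalG G gens w = iter k f (evalG G gens x.2).

Definition GBrP_Rat_decidable (T : Type) (G : group_str T) (gens : seq T) : Prop :=
  decidable_on (GBrP_valid G gens) (GBrP_answer G gens).

(* The words t^-i x t^j form a rational subset L_x of G x|_phi Z, and since
   t^-k x t^k = phi^k(x), the set L_x meets a rational K of G exactly when
   phi^k(x) lies in K for some k.  A register machine computes an automaton
   for L_x from x; running it before a decision procedure for the
   intersection problem decides the Brinkmann problem. *)

From mathcomp Require Import all_boot ssralg ssrint.
From mathcomp Require Import zify.
From Stdlib Require Import FunctionalExtensionality.
Set Implicit Arguments. Unset Strict Implicit. Unset Printing Implicit Defensive.

Notation code := CodeSeq.code.

Lemma code_cons x s : code (x :: s) = 2 ^ x * (code s).*2.+1.
Proof. by []. Qed.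

Lemma code_inj : injective code.
Proof. exact: can_inj CodeSeq.codeK. Qed.

Lemma code_eq0 s : code s = 0 -> s = [::].
Proof. by case: s => //= x s /eqP; rewrite muln_eq0 expn_eq0. Qed.

Lemma size_le_code s : size s <= code s.
Proof.
elim: s => // x s IH; rewrite code_cons /=.
apply: leq_trans (_ : (code s).*2.+1 <= _); last by rewrite leq_pmull // expn_gt0.
by rewrite ltnS -addnn (leq_trans IH) ?leq_addr.
Qed.

Definition regs := nat -> nat.

Lemma upd_eq (R : regs) r v : upd R r v r = v.
Proof. by rewrite /upd eqxx. Qed.

Lemma upd_neq (R : regs) r v x : x != r -> upd R r v x = R x.
Proof. by rewrite /upd => /negbTE ->. Qed.

Ltac regs_simpl := rewrite /upd /= ?eqxx; repeat (case: eqP => ?; try subst); try lia.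

Ltac regs_ext := let x := fresh "x" in apply: functional_extensionality => x; regs_simpl.

Lemma exec_halted p fuel s : size p <= s.1 -> exec p fuel s = s.
Proof. by case: fuel => //= fuel; rewrite leqNgt => /negbTE ->. Qed.

Lemma exec_add p m n s : exec p (m + n) s = exec p n (exec p m s).
Proof.
elim: m s => //= m IH s; case: ifP => // /negbT; rewrite -leqNgt => halted.
by rewrite !exec_halted.
Qed.

Definition reach (p : program) (s s' : mstate) := exists fuel, exec p fuel s = s'.

Lemma reach_refl p s : reach p s s. Proof. by exists 0. Qed.

Lemma reach_trans p s1 s2 s3 : reach p s1 s2 -> reach p s2 s3 -> reach p s1 s3.
Proof. by move=> [m <-] [n <-]; exists (m + n); rewrite exec_add. Qed.

Lemma reach_step pre i post R :
  reach (pre ++ i :: post) (size pre, R) (step (pre ++ i :: post) (size pre, R)).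
Proof. by exists 1 => /=; rewrite size_cat /= -addSnnS leq_addr. Qed.

Lemma nth_instr_mid pre i post : nth (INC 0) (pre ++ i :: post) (size pre) = i.
Proof. by rewrite nth_cat ltnn subnn. Qed.

Definition shift_prog (k : nat) (p : program) : program :=
  map (fun i => if i is DEC r j then DEC r (k + j) else i) p.

Lemma exec_cat_shift pre p fuel pc R :
  exec (pre ++ shift_prog (size pre) p) fuel (size pre + pc, R) =
  (size pre + (exec p fuel (pc, R)).1, (exec p fuel (pc, R)).2).
Proof.
elim: fuel pc R => //= fuel IH pc R.
rewrite size_cat size_map ltn_add2l; case: ifP => // pc_in.
rewrite /step nth_cat ltnNge leq_addr /= addKn (nth_map (INC 0)) //.
case: (nth (INC 0) p pc) => [r|r j]; first by rewrite -addnS IH.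
by case: (R r) => [|k]; rewrite ?IH // -addnS IH.
Qed.

(** * A structured loop language *)

Inductive cmd := cSkip | cInc (r : nat) | cSeq (a b : cmd)
 | cIfz (r : nat) (a b : cmd) | cLoop (r : nat) (a : cmd).

Inductive eval_cmd : cmd -> regs -> regs -> Prop :=
 | EvalSkip R : eval_cmd cSkip R R
 | EvalInc r R : eval_cmd (cInc r) R (upd R r (R r).+1)
 | EvalSeq a b R R1 R2 : eval_cmd a R R1 -> eval_cmd b R1 R2 -> eval_cmd (cSeq a b) R R2
 | EvalIfz0 r a b R R' : R r = 0 -> eval_cmd a R R' -> eval_cmd (cIfz r a b) R R'
 | EvalIfzS r a b R k R' :
     R r = k.+1 -> eval_cmd b (upd R r k) R' -> eval_cmd (cIfz r a b) R R'
 | EvalLoop0 r a R : R r = 0 -> eval_cmd (cLoop r a) R R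
 | EvalLoopS r a R k R1 R2 : R r = k.+1 -> eval_cmd a (upd R r k) R1 ->
     eval_cmd (cLoop r a) R1 R2 -> eval_cmd (cLoop r a) R R2.

Lemma eval_cmd_eq c R R1 R2 : eval_cmd c R R1 -> R1 = R2 -> eval_cmd c R R2.
Proof. by move=> h <-. Qed.

Fixpoint cmd_size c := match c with
 | cSkip => 0 | cInc _ => 1 | cSeq a b => cmd_size a + cmd_size b
 | cIfz _ a b => cmd_size b + cmd_size a + 2 | cLoop _ a => cmd_size a + 2 end.

(* Register 1 is never written by compiled code, so [DEC 1 j] is a jump. *)
Fixpoint compile_cmd (off : nat) (c : cmd) : program := match c with
 | cSkip => [::]
 | cInc r => [:: INC r]
 | cSeq a b => compile_cmd off a ++ compile_cmd (off + cmd_size a) b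
 | cIfz r a b => DEC r (off + cmd_size b + 2) :: compile_cmd off.+1 b ++
     DEC 1 (off + cmd_size b + cmd_size a + 2) :: compile_cmd (off + cmd_size b + 2) a
 | cLoop r a => DEC r (off + cmd_size a + 2) :: compile_cmd off.+1 a ++ [:: DEC 1 off]
 end.

Fixpoint avoids_r1 c := match c with
 | cSkip => true | cInc r => r != 1 | cSeq a b => avoids_r1 a && avoids_r1 b
 | cIfz r a b => [&& r != 1, avoids_r1 a & avoids_r1 b]
 | cLoop r a => (r != 1) && avoids_r1 a end.

Lemma size_compile_cmd c off : size (compile_cmd off c) = cmd_size c.
Proof.
elim: c off => //= [a IHa b IHb|r a IHa b IHb|r a IHa] off.
- by rewrite size_cat IHa IHb.
- by rewrite size_cat /= IHa IHb; lia.
- by rewrite size_cat /= IHa; lia.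
Qed.

Lemma eval_cmd_r1 c R R' : eval_cmd c R R' -> avoids_r1 c -> R' 1 = R 1.
Proof.
elim=> //=.
- by move=> r R0 r1; rewrite upd_neq // eq_sym.
- by move=> a b R0 R1 R2 _ IH1 _ IH2 /andP[/IH1 <- /IH2 ->].
- by move=> r a b R0 R1 _ _ IH /and3P[_ /IH].
- by move=> r a b R0 k R1 _ _ IH /and3P[r1 _ /IH ->]; rewrite upd_neq // eq_sym.
- move=> r a R0 k R1 R2 _ _ IH1 _ IH2 av; rewrite IH2 //.
  by case/andP: av => r1 /IH1 ->; rewrite upd_neq // eq_sym.
Qed.

Lemma eval_loop_iter r body (h : regs -> regs) (inv : regs -> Prop) :
  (forall R, inv R -> eval_cmd body R (h R) /\ inv (h R)) ->
  (forall R v, h (upd R r v) = upd (h R) r v) ->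
  (forall R v, inv R -> inv (upd R r v)) ->
  forall R, inv R -> eval_cmd (cLoop r body) R (iter (R r) h (upd R r 0)).
Proof.
move=> body_h h_upd inv_upd R; move eq_n : (R r) => n.
elim: n R eq_n => [|n IH] R Rr invR; first by apply: eval_cmd_eq (EvalLoop0 _ Rr) _; regs_ext.
have [e1 inv1] := body_h _ (inv_upd R n invR).
apply: EvalLoopS Rr e1 _.
have h_r : h (upd R r n) r = n by rewrite h_upd upd_eq.
apply: eval_cmd_eq (IH _ h_r inv1) _.
rewrite iterSr; congr iter.
by rewrite !h_upd; regs_ext.
Qed.

Lemma eval_loop_inv r body (inv : nat -> regs -> Prop) :
  (forall k R, inv k.+1 R -> R r = k.+1 ->
     exists R', eval_cmd body (upd R r k) R' /\ inv k R' /\ R' r = k) ->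
  forall R, inv (R r) R -> exists R', eval_cmd (cLoop r body) R R' /\ inv 0 R'.
Proof.
move=> body_inv R; move eq_n : (R r) => n.
elim: n R eq_n => [|n IH] R Rr invR; first by exists R; split=> //; exact: EvalLoop0.
have [R1 [e1 [inv1 R1r]]] := body_inv n R invR Rr.
have [R2 [e2 inv2]] := IH R1 R1r inv1.
by exists R2; split=> //; apply: EvalLoopS Rr e1 e2.
Qed.

Definition embeds (P : program) (off : nat) (q : program) :=
  exists pre post, P = pre ++ q ++ post /\ size pre = off.

Lemma embeds_catl P off a b : embeds P off (a ++ b) -> embeds P off a.
Proof. by move=> [pre [post [-> <-]]]; exists pre, (b ++ post); rewrite -catA. Qed.

Lemma embeds_catr P off a b : embeds P off (a ++ b) -> embeds P (off + size a) b.
Proof.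
move=> [pre [post [-> <-]]]; exists (pre ++ a), post.
by rewrite size_cat -!catA.
Qed.

Lemma embeds_cons P off i q : embeds P off (i :: q) -> embeds P off.+1 q.
Proof. by rewrite -cat1s => /embeds_catr; rewrite addn1. Qed.

Lemma embeds_fetch P off i q : embeds P off (i :: q) -> nth (INC 0) P off = i.
Proof. by move=> [pre [post [-> <-]]]; rewrite nth_instr_mid. Qed.

Lemma reach_next P off i q R : embeds P off (i :: q) -> reach P (off, R) (step P (off, R)).
Proof. by move=> [pre [post [-> <-]]]; apply: reach_step. Qed.

Lemma compile_cmd_correct c R R' : eval_cmd c R R' -> avoids_r1 c -> R 1 = 0 ->
  forall P off, embeds P off (compile_cmd off c) -> reach P (off, R) (off + cmd_size c, R').
Proof.
elim=> /= {c R R'}.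
- by move=> R _ _ P off _; rewrite addn0; apply: reach_refl.
- move=> r R _ _ P off emb.
  by have := reach_next R emb; rewrite /step (embeds_fetch emb) addn1.
- move=> a b R R1 R2 ea IHa _ IHb /andP[av_a av_b] R1_0 P off emb.
  apply: reach_trans (IHa av_a R1_0 P off (embeds_catl emb)) _.
  have := embeds_catr emb; rewrite size_compile_cmd addnA => /(IHb av_b _ P).
  by apply; rewrite (eval_cmd_r1 ea av_a).
- move=> r a b R R' Rr _ IHa /and3P[_ av_a _] R1_0 P off emb.
  apply: reach_trans (reach_next R emb) _; rewrite /step (embeds_fetch emb) Rr /=.
  have := embeds_cons (embeds_catr (embeds_cons emb)); rewrite size_compile_cmd.
  have -> : (off.+1 + cmd_size b).+1 = off + cmd_size b + 2 by lia.
  move=> /(IHa av_a R1_0 P).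
  by have -> : off + (cmd_size b + cmd_size a + 2) = off + cmd_size b + 2 + cmd_size a by lia.
- move=> r a b R k R' Rr eb IHb /and3P[r1 _ av_b] R1_0 P off emb.
  apply: reach_trans (reach_next R emb) _; rewrite /step (embeds_fetch emb) Rr /=.
  have Rk_0 : upd R r k 1 = 0 by rewrite upd_neq // eq_sym.
  have emb_b := embeds_catl (embeds_cons emb).
  apply: reach_trans (IHb av_b Rk_0 P _ emb_b) _.
  have emb_jump := embeds_catr (embeds_cons emb); rewrite size_compile_cmd in emb_jump.
  apply: reach_trans (reach_next R' emb_jump) _.
  rewrite /step (embeds_fetch emb_jump) (eval_cmd_r1 eb av_b) Rk_0.
  have -> : off + (cmd_size b + cmd_size a + 2) = off + cmd_size b + cmd_size a + 2 by lia.
  exact: reach_refl.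
- move=> r a R Rr _ _ P off emb.
  have := reach_next R emb; rewrite /step (embeds_fetch emb) Rr.
  by have -> : off + (cmd_size a + 2) = off + cmd_size a + 2 by lia.
- move=> r a R k R1 R2 Rr ea IHa _ IHloop av R1_0 P off emb.
  case/andP: (av) => r1 av_a.
  have Rk_0 : upd R r k 1 = 0 by rewrite upd_neq // eq_sym.
  apply: reach_trans _ (IHloop av _ P off emb); last by rewrite (eval_cmd_r1 ea av_a).
  apply: reach_trans (reach_next R emb) _; rewrite /step (embeds_fetch emb) Rr.
  have emb_a := embeds_catl (embeds_cons emb).
  apply: reach_trans (IHa av_a Rk_0 P _ emb_a) _.
  have emb_jump := embeds_catr (embeds_cons emb); rewrite size_compile_cmd in emb_jump.
  have := reach_next R1 emb_jump.
  by rewrite /step (embeds_fetch emb_jump) (eval_cmd_r1 ea av_a) Rk_0.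
Qed.

Lemma halts_with_compiled c p n m out :
  eval_cmd c (init_regs n) (init_regs m) -> avoids_r1 c -> halts_with p m out ->
  halts_with (compile_cmd 0 c ++ shift_prog (cmd_size c) p) n out.
Proof.
move=> ec av [fuel [halted out_eq]].
have emb : embeds (compile_cmd 0 c ++ shift_prog (cmd_size c) p) 0 (compile_cmd 0 c).
  by exists [::], (shift_prog (cmd_size c) p).
have [fuel_c run_c] := compile_cmd_correct ec av erefl emb.
exists (fuel_c + fuel); rewrite exec_add run_c.
have := exec_cat_shift (compile_cmd 0 c) p fuel 0 (init_regs m).
rewrite size_compile_cmd addn0 => ->.
by split=> //; rewrite size_cat size_map size_compile_cmd leq_add2l.
Qed.

Lemma decidable_on_reduction (I J : countType) (validI : I -> Prop) (PI : I -> Prop)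
    (validJ : J -> Prop) (PJ : J -> Prop) (F : I -> J) (c : cmd) :
  avoids_r1 c ->
  (forall x, validI x -> eval_cmd c (init_regs (pickle x)) (init_regs (pickle (F x)))) ->
  (forall x, validI x -> validJ (F x)) ->
  (forall x, validI x -> PJ (F x) <-> PI x) ->
  decidable_on validJ PJ -> decidable_on validI PI.
Proof.
move=> av cF validF PF [p decide_p].
exists (compile_cmd 0 c ++ shift_prog (cmd_size c) p) => x vx.
have [b [halts_b b_eq]] := decide_p _ (validF x vx).
by exists b; split; [exact: halts_with_compiled (cF x vx) av halts_b | rewrite -PF].
Qed.

(* Register 0 holds input and output, register 1 stays zero, and registers
   2 to 7 are scratch registers of the macros below, which leave them zero. *)

Definition cIncs (ds : seq nat) := foldr (fun d c => cSeq (cInc d) c) cSkip ds.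

Lemma eval_cIncs ds R : eval_cmd (cIncs ds) R (fun x => R x + count_mem x ds).
Proof.
elim: ds R => [|d ds IH] R /=; first by apply: eval_cmd_eq (EvalSkip R) _; regs_ext.
by apply: EvalSeq (EvalInc _ _) _; apply: eval_cmd_eq (IH _) _; regs_ext.
Qed.

Definition cIncBy r k := iter k (cSeq (cInc r)) cSkip.

Lemma eval_cIncBy r k R : eval_cmd (cIncBy r k) R (upd R r (R r + k)).
Proof.
elim: k R => [|k IH] R /=; first by apply: eval_cmd_eq (EvalSkip _) _; regs_ext.
by apply: EvalSeq (EvalInc _ _) _; apply: eval_cmd_eq (IH _) _; regs_ext.
Qed.

Lemma avoids_r1_cIncBy r k : r != 1 -> avoids_r1 (cIncBy r k).
Proof. by move=> r1; elim: k => //= k ->; rewrite r1. Qed.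

Arguments cIncBy : simpl never.

Definition cTransfer r ds := cLoop r (cIncs ds).

Lemma eval_cTransfer r ds R : r \notin ds ->
  eval_cmd (cTransfer r ds) R (fun x => if x == r then 0 else R x + count_mem x ds * R r).
Proof.
move=> r_ds; move eq_n : (R r) => n; elim: n R eq_n => [|n IH] R Rr.
  apply: eval_cmd_eq (EvalLoop0 _ Rr) _; apply: functional_extensionality => x.
  by case: eqP => [->|_]; rewrite ?Rr // muln0 addn0.
apply: EvalLoopS Rr (eval_cIncs _ _) _.
have Rr' : (fun x => upd R r n x + count_mem x ds) r = n.
  by rewrite /= upd_eq; have /count_memPn -> := r_ds; rewrite addn0.
apply: eval_cmd_eq (IH _ Rr') _; apply: functional_extensionality => x /=.
by case: eqP => // /eqP xr; rewrite upd_neq //; lia.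
Qed.

Definition cMove r d := cTransfer r [:: d].

Lemma eval_cMove r d R : r <> d -> eval_cmd (cMove r d) R (upd (upd R r 0) d (R d + R r)).
Proof.
by move=> rd; apply: eval_cmd_eq (eval_cTransfer _ _) _; [rewrite !inE; lia | regs_ext].
Qed.

Definition cCopy r d := cSeq (cTransfer r [:: d; 2]) (cTransfer 2 [:: r]).

Lemma eval_cCopy r d R : r <> d -> r <> 2 -> d <> 2 -> R 2 = 0 ->
  eval_cmd (cCopy r d) R (upd R d (R d + R r)).
Proof.
move=> rd r2 d2 R2.
apply: EvalSeq (eval_cTransfer _ _) _; first by rewrite !inE; lia.
by apply: eval_cmd_eq (eval_cTransfer _ _) _; [rewrite !inE; lia | regs_ext].
Qed.

Definition cDouble c := cSeq (cTransfer c [:: 2; 2]) (cTransfer 2 [:: c]).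

Lemma eval_cDouble c R : c <> 2 -> R 2 = 0 -> eval_cmd (cDouble c) R (upd R c (R c).*2).
Proof.
move=> c2 R2.
apply: EvalSeq (eval_cTransfer _ _) _; first by rewrite !inE; lia.
by apply: eval_cmd_eq (eval_cTransfer _ _) _; [rewrite !inE; lia | regs_ext].
Qed.

Definition cCons a b c := cSeq (cTransfer b [:: c; c]) (cSeq (cInc c) (cLoop a (cDouble c))).

Lemma eval_cCons a b c R : a <> b -> a <> c -> b <> c -> a <> 2 -> b <> 2 -> c <> 2 ->
  R 2 = 0 -> R c = 0 ->
  eval_cmd (cCons a b c) R (upd (upd (upd R b 0) c (2 ^ (R a) * (R b).*2.+1)) a 0).
Proof.
move=> ab ac bc a2 b2 c2 R2 Rc.
apply: EvalSeq (eval_cTransfer _ _) _; first by rewrite !inE; lia.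
apply: EvalSeq (EvalInc _ _) _.
set R1 := upd _ _ _.
pose dbl (R : regs) := upd R c (R c).*2.
have dbl_iter k (R' : regs) : iter k dbl R' = upd R' c (R' c * 2 ^ k).
  elim: k => [|k IH] /=; first by regs_ext.
  by rewrite /dbl IH; regs_ext; rewrite expnS; lia.
have := @eval_loop_iter a (cDouble c) dbl (fun R => R 2 = 0) _ _ _ R1.
rewrite dbl_iter => /(_ _ _ _ _)/eval_cmd_eq; apply.
- move=> R' R'2; split; first exact: eval_cDouble.
  by rewrite /dbl upd_neq //; apply/eqP; lia.
- by move=> R' v; rewrite /dbl; regs_ext.
- by move=> R' v R'2; rewrite upd_neq //; apply/eqP; lia.
- by rewrite /R1; regs_simpl.
- rewrite /R1; regs_ext; rewrite Rc mulnC.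
  by congr (_ * _); [congr (2 ^ _) | rewrite -muln2]; lia.
Qed.

Definition cPair a b c := cSeq (cCons b 6 7) (cCons a 7 c).

Lemma eval_cPair a b c R : a <> b -> a <> c -> b <> c -> 7 < a -> 7 < b -> 7 < c ->
  R 2 = 0 -> R 6 = 0 -> R 7 = 0 -> R c = 0 ->
  eval_cmd (cPair a b c) R (upd (upd (upd R a 0) b 0) c (code [:: R a; R b])).
Proof.
move=> ab ac bc a7 b7 c7 R2 R6 R7 Rc.
apply: EvalSeq (eval_cCons _ _ _ _ _ _ _ _) _ => //; try lia.
apply: eval_cmd_eq (eval_cCons _ _ _ _ _ _ _ _) _; try lia; try by regs_simpl.
by rewrite !code_cons; regs_ext; rewrite R6.
Qed.

Definition cHalve c q p := cLoop c (cIfz p (cInc p) (cInc q)).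

Lemma eval_cHalve c q p R : c <> q -> c <> p -> q <> p -> R p <= 1 ->
  eval_cmd (cHalve c q p) R
    (upd (upd (upd R c 0) q (R q + (R p + R c)./2)) p (odd (R p + R c))).
Proof.
move=> cq cp qp; move eq_n : (R c) => n; elim: n R eq_n => [|n IH] R Rc Rp.
  apply: eval_cmd_eq (EvalLoop0 _ Rc) _; rewrite addn0.
  have [Rp'|Rp'] : R p = 0 \/ R p = 1 by lia.
  1, 2: by rewrite Rp'; regs_ext.
have [Rp0|Rp1] : R p = 0 \/ R p = 1 by lia.
  apply: EvalLoopS Rc (EvalIfz0 _ _ (EvalInc p _)) _.
    by rewrite upd_neq //; apply/eqP; lia.
  set R1 := upd _ _ _.
  have R1c : R1 c = n by rewrite /R1; regs_simpl.
  have R1p : R1 p = 1 by rewrite /R1; regs_simpl.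
  apply: eval_cmd_eq (IH R1 R1c _) _; first lia.
  by rewrite R1p /R1; regs_ext; rewrite ?Rp0 ?addSn ?add0n /=; lia.
apply: EvalLoopS Rc (EvalIfzS (k := 0) _ _ (EvalInc q _)) _.
  by rewrite upd_neq ?Rp1 //; apply/eqP; lia.
set R1 := upd _ _ _.
have R1c : R1 c = n by rewrite /R1; regs_simpl.
have R1p : R1 p = 0 by rewrite /R1; regs_simpl.
apply: eval_cmd_eq (IH R1 R1c _) _; first lia.
by rewrite R1p /R1; regs_ext; rewrite ?Rp1 ?addSn ?add0n /=; lia.
Qed.

Definition halve_even c n (R : regs) : regs :=
  if odd (R c) then R else upd (upd R c (R c)./2) n (R n).+1.

Definition cHalveEven c n := cSeq (cHalve c 4 5)
  (cIfz 5 (cSeq (cMove 4 c) (cInc n)) (cSeq (cTransfer 4 [:: c; c]) (cInc c))).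

Lemma eval_cHalveEven c n R : c <> n -> 5 < c -> 5 < n -> R 4 = 0 -> R 5 = 0 ->
  eval_cmd (cHalveEven c n) R (halve_even c n R).
Proof.
move=> cn c5 n5 R4 R5.
apply: EvalSeq (eval_cHalve _ _ _ _) _; try lia.
have halves := odd_double_half (R c); rewrite -muln2 in halves.
rewrite /halve_even; case: (boolP (odd (R c))) => odd_c.
  apply: (@EvalIfzS _ _ _ _ 0); first by rewrite upd_eq R5 add0n odd_c.
  apply: EvalSeq (eval_cTransfer _ _) _; first by rewrite !inE; lia.
  apply: eval_cmd_eq (EvalInc _ _) _.
  by rewrite odd_c in halves; regs_ext.
apply: EvalIfz0; first by rewrite upd_eq R5 add0n (negbTE odd_c).
apply: EvalSeq (eval_cMove _ _) _; first lia.
apply: eval_cmd_eq (EvalInc _ _) _.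
by rewrite (negbTE odd_c) in halves; regs_ext.
Qed.

Lemma iter_halve_even_odd c n j R : odd (R c) -> iter j (halve_even c n) R = R.
Proof. by move=> odd_c; elim: j => //= j ->; rewrite /halve_even odd_c. Qed.

Lemma iter_halve_even c n x y R : c <> n -> R c = 2 ^ x * y.*2.+1 ->
  iter x (halve_even c n) R = upd (upd R c y.*2.+1) n (R n + x).
Proof.
move=> cn; elim: x R => [|x IH] R Rc.
  by rewrite /= expn0 mul1n in Rc; regs_ext.
rewrite iterSr.
have even_c : odd (R c) = false by rewrite Rc expnS -mulnA oddM.
have half_c : halve_even c n R c = 2 ^ x * y.*2.+1.
  rewrite /halve_even even_c upd_neq; last by apply/eqP.
  by rewrite upd_eq Rc expnS -mulnA mul2n doubleK.
by rewrite (IH _ half_c) /halve_even even_c; regs_ext.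
Qed.

(* The 2-adic valuation [x] of [code (x :: s)] is at most [code (x :: s)],
   so [code (x :: s)] rounds of [cHalveEven] reach the odd part. *)
Definition cUncons c n m := cSeq (cCopy c 3)
  (cSeq (cLoop 3 (cHalveEven c n)) (cSeq (cHalve c m 5) (cTransfer 5 [::]))).

Lemma eval_cUncons c n m R x s : c <> n -> c <> m -> n <> m -> 5 < c -> 5 < n -> 5 < m ->
  R 2 = 0 -> R 3 = 0 -> R 4 = 0 -> R 5 = 0 -> R n = 0 -> R m = 0 ->
  R c = code (x :: s) ->
  eval_cmd (cUncons c n m) R (upd (upd (upd R c 0) n x) m (code s)).
Proof.
move=> cn cm nm c5 n5 m5 R2 R3 R4 R5 Rn Rm; rewrite code_cons => Rc.
eapply EvalSeq; first by apply: eval_cCopy; lia.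
set R1 := upd _ _ _.
have := @eval_loop_iter 3 (cHalveEven c n) (halve_even c n)
  (fun R => R 4 = 0 /\ R 5 = 0) _ _ _ R1.
move=> /(_ _ _ _ _)/EvalSeq; apply.
- move=> R' [R'4 R'5]; split; first exact: eval_cHalveEven.
  by rewrite /halve_even; case: ifP => _; split; regs_simpl.
- move=> R' v; rewrite /halve_even upd_neq; last by apply/eqP; lia.
  by case: ifP => _ //; regs_ext.
- by move=> R' v [R'4 R'5]; split; regs_simpl.
- by split; rewrite /R1; regs_simpl.
have -> : upd R1 3 0 = R by rewrite /R1; regs_ext.
have -> : R1 3 = R c by rewrite /R1; regs_simpl.
have x_le : x <= R c.
  rewrite Rc; apply: leq_trans (ltnW (ltn_expl x (ltnSn 1))) _.
  by rewrite leq_pmulr.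
rewrite -(subnK x_le) iterD (iter_halve_even cn Rc) iter_halve_even_odd; last first.
  by regs_simpl; rewrite odd_double.
apply: EvalSeq (eval_cHalve _ _ _ _) _; try lia; first by regs_simpl.
apply: eval_cmd_eq (eval_cTransfer _ _) _ => //.
have odd_y : odd (code s).*2.+1 by rewrite /= odd_double.
have half_y : ((code s).*2.+1)./2 = code s by rewrite /= uphalf_double.
by regs_ext; rewrite ?odd_y ?half_y /=; lia.
Qed.

Definition cPushEdge p l q :=
  cSeq (cPair p l 22) (cSeq (cPair 22 q 20) (cSeq (cMove 15 22) (cCons 20 22 15))).

Lemma eval_cPushEdge p l q R : uniq [:: p; l; q; 15; 20; 22] -> 7 < p -> 7 < l -> 7 < q ->
  R 2 = 0 -> R 6 = 0 -> R 7 = 0 -> R 20 = 0 -> R 22 = 0 ->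
  eval_cmd (cPushEdge p l q) R (upd (upd (upd (upd R p 0) l 0) q 0) 15
    (2 ^ code [:: code [:: R p; R l]; R q] * (R 15).*2.+1)).
Proof.
rewrite /= !inE => distinct p7 l7 q7 R2 R6 R7 R20 R22.
eapply EvalSeq; first by apply: eval_cPair; lia.
eapply EvalSeq; first by apply: eval_cPair; regs_simpl.
eapply EvalSeq; first by apply: eval_cMove; lia.
by apply: eval_cmd_eq; [apply: eval_cCons; regs_simpl | regs_ext].
Qed.

(** * Conjugates in the semidirect product *)

Lemma cat_eq_r (U : Type) (p s : seq U) : p ++ s = s -> p = [::].
Proof. by move=> /(congr1 size); rewrite size_cat -[RHS]add0n => /addIn /size0nil. Qed.

Lemma run_cat tr p q r u v : run tr p u q -> run tr q v r -> run tr p (u ++ v) r.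
Proof.
elim: u p => [|x u IH] p /=; first by move=> ->.
by move=> [p' [edge run_u]] run_v; exists p'; split=> //; apply: IH run_u run_v.
Qed.

Lemma run_nseq tr q l k : (q, l, q) \in tr -> run tr q (nseq k l) q.
Proof. by move=> loop; elim: k => //= k IH; exists q. Qed.

Lemma run_word_over k tr q v q' : run tr q v q' -> all (fun e => e.1.2 < k) tr ->
  word_over k v.
Proof.
elim: v q => //= x v IH q [p' [edge run_v]] tr_over.
by rewrite (IH _ run_v tr_over) andbT; have := allP tr_over _ edge.
Qed.

Fixpoint chain_edges (s : word) (acc : seq (nat * nat * nat)) : seq (nat * nat * nat) :=
  if s is y :: s' then chain_edges s' (((code s, y), code s') :: acc) else acc.

Lemma chain_edges_acc e s acc : e \in acc -> e \in chain_edges s acc.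
Proof. by elim: s acc => //= x s IH acc e_acc; apply: IH; rewrite inE e_acc orbT. Qed.

Lemma chain_edges_suffix p y s acc :
  ((code (y :: s), y), code s) \in chain_edges (p ++ y :: s) acc.
Proof.
elim: p acc => [|z p IH] acc /=; last exact: IH.
by apply: chain_edges_acc; rewrite inE eqxx.
Qed.

Lemma mem_chain_edges e s acc : e \in chain_edges s acc ->
  e \in acc \/ exists p y s', s = p ++ y :: s' /\ e = ((code (y :: s'), y), code s').
Proof.
elim: s acc => [|y s IH] acc /=; first by left.
move=> /IH [|[p [y' [s' [-> ->]]]]]; last by right; exists (y :: p), y', s'.
by rewrite inE => /orP[/eqP ->|]; [right; exists [::], y, s | left].
Qed.

(* States are codes of suffixes of [xw]: reading [xw] leads from [code xw]
   to the final state [0 = code [::]], with a [t^-1]-loop before and a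
   [t]-loop after, so the language is [t^-i xw t^j]. *)
Definition conj_nfa (nn : nat) (xw : word) : nfa :=
  ((code xw, [:: 0]), ((0, nn), 0) :: ((code xw, nn.+1), code xw) :: chain_edges xw [::]).

Lemma run_conj_nfa_suffix nn xw p s : xw = p ++ s -> run (conj_nfa nn xw).2 (code s) s 0.
Proof.
elim: s p => [|y s IH] p xw_eq //=.
exists (code s); split; last by apply: (IH (rcons p y)); rewrite xw_eq cat_rcons.
by rewrite !inE xw_eq chain_edges_suffix !orbT.
Qed.

Lemma conj_nfa_over nn xw : word_over nn xw -> nfa_over nn.+2 (conj_nfa nn xw).
Proof.
move=> xw_over; rewrite /nfa_over /= !ltnS leqnn ltnW //=.
apply/allP => e /mem_chain_edges [//|[p [y [s [xw_eq ->]]]]] /=.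
have : y \in xw by rewrite xw_eq mem_cat inE eqxx orbT.
by move/(allP xw_over) => /= y_lt; rewrite ltnW // ltnW.
Qed.

Lemma conj_nfa_accepts nn xw k :
  accepts (conj_nfa nn xw) (nseq k nn.+1 ++ xw ++ nseq k nn).
Proof.
exists 0; first by rewrite inE.
apply: run_cat (run_nseq _ _) _; first by rewrite !inE eqxx orbT.
apply: run_cat (@run_conj_nfa_suffix nn xw [::] xw erefl) _.
by apply: run_nseq; rewrite inE eqxx.
Qed.

Section SemidirectProduct.

Variables (T : Type) (G : group_str T) (gens : seq T) (f : T -> T).

Local Notation nn := (2 * size gens).

Lemma morph_one : {morph f : a b / gmul G a b} -> f (gone G) = gone G.
Proof.
move=> f_morph; have := f_morph (gone G) (gone G); rewrite gmul1g => f1.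
have : gmul G (ginv G (f (gone G))) (f (gone G)) =
       gmul G (ginv G (f (gone G))) (gmul G (f (gone G)) (f (gone G))) by rewrite -f1.
by rewrite gmulA gmulVg gmul1g.
Qed.

Lemma foldl_letterG y w :
  foldl (fun a x => gmul G a (letterG G gens x)) y w = gmul G y (evalG G gens w).
Proof.
rewrite /evalG; elim/last_ind: w => [|w x IH]; first by rewrite gmulg1.
by rewrite !foldl_rcons IH -gmulA.
Qed.

Lemma sd_run_cat u v s s' s'' :
  sd_run G gens f u s s' -> sd_run G gens f v s' s'' -> sd_run G gens f (u ++ v) s s''.
Proof.
elim: u s => [|x u IH] s /=; first by move=> ->.
by move=> [t [step_x run_u]] run_v; exists t; split=> //; apply: IH run_u run_v.
Qed.

Lemma sd_run_wordG w e y : word_over nn w ->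
  sd_run G gens f w (e, y) (e, gmul G y (evalG G gens w)).
Proof.
rewrite -foldl_letterG; elim: w y => [|x w IH] y //= /andP[x_lt w_over].
by exists (e, gmul G y (letterG G gens x)); split; [rewrite /sd_step x_lt | apply: IH].
Qed.

Lemma sd_run_wordGP w s s' : word_over nn w -> sd_run G gens f w s s' ->
  s' = (s.1, gmul G s.2 (evalG G gens w)).
Proof.
rewrite -foldl_letterG; elim: w s => [|x w IH] [e y] /=; first by move=> _ ->.
move=> /andP[x_lt w_over] [s1 [step_x run_w]].
move: step_x; rewrite /sd_step x_lt => -[e1 y1].
by rewrite (IH _ w_over run_w) e1 y1.
Qed.

Lemma sd_run_t k e y :
  sd_run G gens f (nseq k nn) (e, y) ((e + k%:Z)%R, iter k f y).
Proof.
elim: k e y => [|k IH] e y /=; first by rewrite GRing.addr0.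
exists ((e + 1)%R, f y); split; first by rewrite /sd_step ltnn eqxx.
have -> : (e + k.+1%:Z)%R = ((e + 1) + k%:Z)%R by lia.
by rewrite -iterS iterSr; apply: IH.
Qed.

Lemma sd_run_tinv k e : f (gone G) = gone G ->
  sd_run G gens f (nseq k nn.+1) (e, gone G) ((e - k%:Z)%R, gone G).
Proof.
move=> f1; elim: k e => [|k IH] e /=; first by rewrite GRing.subr0.
exists ((e - 1)%R, gone G); split.
  by rewrite /sd_step ltnNge leqnSn /= eqSS (gtn_eqF (ltnSn _)) eqxx f1.
have -> : (e - k.+1%:Z)%R = ((e - 1) - k%:Z)%R by lia.
exact: IH.
Qed.

Lemma sd_eval_conj xw k : is_aut G f -> word_over nn xw ->
  sd_eval G gens f (nseq k nn.+1 ++ xw ++ nseq k nn) (0%R, iter k f (evalG G gens xw)).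
Proof.
move=> [f_morph _] xw_over.
apply: sd_run_cat (sd_run_tinv k 0 (morph_one f_morph)) _.
apply: sd_run_cat (sd_run_wordG _ _ xw_over) _.
have := sd_run_t k (0 - k%:Z)%R (gmul G (gone G) (evalG G gens xw)).
by rewrite gmul1g (_ : (0 - k%:Z + k%:Z)%R = 0%R) //; lia.
Qed.

(* A prefix of [t^-i xw t^j] that has read the part [p] of [xw = p ++ s]
   leaves the automaton in state [code s] and evaluates to [t^(j'-i) f^j'(p)],
   where [j' = 0] as long as [s] is nonempty. *)
Definition conj_inv xw q (st : int * T) := exists p s (i j : nat),
  [/\ xw = p ++ s, q = code s, st = ((j%:Z - i%:Z)%R, iter j f (evalG G gens p))
    & s != [::] -> j = 0].

Lemma conj_inv_step xw q l q' st st' : is_aut G f -> word_over nn xw ->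
  (q, l, q') \in (conj_nfa nn xw).2 -> sd_step G gens f l st st' ->
  conj_inv xw q st -> conj_inv xw q' st'.
Proof.
move=> [f_morph /bij_inj f_inj] xw_over edge step_l [p [s [i [j [xw_eq q_eq st_eq j0]]]]].
move: edge q_eq step_l; subst st; case: st' => e' y'.
rewrite inE => /orP[/eqP [-> -> ->]|].
  move=> /esym/code_eq0 s0; subst s.
  rewrite /sd_step ltnn eqxx /= => -[-> ->].
  by exists p, [::], i, j.+1; split=> //; congr (_, _); lia.
rewrite inE => /orP[/eqP [-> -> ->]|].
  move=> /code_inj s_xw; subst s.
  rewrite /sd_step ltnNge leqnSn /= eqSS (gtn_eqF (ltnSn _)) eqxx /= => -[-> f_y'].
  have p0 : p = [::] by apply: (@cat_eq_r _ p xw); rewrite -xw_eq.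
  have iter_one k : iter k f (gone G) = gone G by elim: k => //= k ->; exact: morph_one.
  have -> : y' = iter j f (evalG G gens [::]).
    by apply: f_inj; rewrite f_y' p0 /= iter_one morph_one.
  by exists [::], xw, i.+1, j; split=> //; congr (_, _); lia.
move=> /mem_chain_edges [//|[p' [y [s' [_ [-> -> ->]]]]]].
rewrite -code_cons => /code_inj s_eq; subst s.
have y_lt : y < nn by apply: (allP xw_over); rewrite xw_eq mem_cat inE eqxx orbT.
rewrite /sd_step y_lt /= => -[-> ->].
exists (rcons p y), s', i, 0; split=> //; first by rewrite xw_eq cat_rcons.
by rewrite j0 //= /evalG foldl_rcons.
Qed.

Lemma conj_inv_run xw u q q' st st' : is_aut G f -> word_over nn xw ->
  run (conj_nfa nn xw).2 q u q' -> sd_run G gens f u st st' ->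
  conj_inv xw q st -> conj_inv xw q' st'.
Proof.
move=> f_aut xw_over; elim: u q st => [|x u IH] q st /=; first by move=> -> ->.
move=> [q1 [edge run_u]] [st1 [step_x sd_u]] inv_q.
exact: IH run_u sd_u (conj_inv_step f_aut xw_over edge step_x inv_q).
Qed.

Lemma sd_eval_conj_nfa xw u st : is_aut G f -> word_over nn xw ->
  accepts (conj_nfa nn xw) u -> sd_eval G gens f u st ->
  exists i j : nat, st = ((j%:Z - i%:Z)%R, iter j f (evalG G gens xw)).
Proof.
move=> f_aut xw_over [q q_final run_u] sd_u.
have inv0 : conj_inv xw (code xw) (0%R, gone G) by exists [::], xw, 0, 0.
have [p [s [i [j [xw_eq q_eq -> _]]]]] := conj_inv_run f_aut xw_over run_u sd_u inv0.
move: q_final; rewrite inE q_eq => /eqP/code_eq0 s0.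
by exists i, j; rewrite xw_eq s0 cats0.
Qed.

End SemidirectProduct.

Definition GBrP_to_IP (nn : nat) (x : GBrP_instance) : IP_instance :=
  ((x.1.2, conj_nfa nn x.2), x.1.1).

Lemma GBrP_to_IP_valid (T : Type) (G : group_str T) (gens : seq T) x :
  GBrP_valid G gens x -> IP_valid G gens (GBrP_to_IP (2 * size gens) x).
Proof.
case=> [A_over [phi_valid xw_over]]; split=> //; split; first exact: conj_nfa_over.
by apply: sub_all A_over => e /= e_lt; rewrite ltnW // ltnW.
Qed.

Lemma GBrP_to_IP_answer (T : Type) (G : group_str T) (gens : seq T) x :
  GBrP_valid G gens x ->
  (IP_answer G gens (GBrP_to_IP (2 * size gens) x) <-> GBrP_answer G gens x).
Proof.
case: x => [[A phiw] xw] [A_over [_ xw_over]] /=; split.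
  move=> [f [rep [u [v [st [accept_u [[q q_fin run_v] [sd_u sd_v]]]]]]]].
  have [i [j st_eq]] := sd_eval_conj_nfa rep.1 xw_over accept_u sd_u.
  have := sd_run_wordGP (run_word_over run_v A_over) sd_v.
  rewrite st_eq /= gmul1g => -[_ eval_v].
  by exists f; split=> //; exists j, v; split; [exists q | rewrite eval_v].
move=> [f [rep [k [w [[q q_fin run_w] w_eq]]]]].
have w_over := run_word_over run_w A_over.
exists f; split=> //.
exists (nseq k (2 * size gens).+1 ++ xw ++ nseq k (2 * size gens)), w, (0%R, evalG G gens w).
split; first exact: conj_nfa_accepts.
split; first by exists q.
split; first by rewrite w_eq; exact: sd_eval_conj rep.1 xw_over.
by rewrite -[evalG G gens w](gmul1g G); exact: sd_run_wordG.
Qed.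

(** * Computing the reduction *)

(* Register contents during the computation: the codes [a] of the automaton
   for K, [f] of the automorphism and [w] of the word, the code [cur] of the
   unread suffix of the word, the code [acc] of the transitions produced so
   far, and a loop counter [k]. *)
Definition layout (a f w cur acc k : nat) : regs := fun x =>
  if x == 13 then a else if x == 14 then f else if x == 12 then w else
  if x == 16 then cur else if x == 15 then acc else if x == 19 then k else 0.

Ltac layout_side := rewrite /upd /init_regs /layout /=; try lia; try reflexivity.

Ltac layout_ext := let x := fresh "x" in
  apply: functional_extensionality => x;
  do 25 (case: x => [|x]; first by cbn; rewrite ?add0n); by cbn.

Definition cUnpack := cSeq (cMove 0 9) (cSeq (cUncons 9 10 11) (cSeq (cUncons 11 12 20)
  (cSeq (cUncons 10 13 11) (cSeq (cUncons 11 14 20) (cSeq (cCopy 12 16) (cCopy 12 19)))))).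

Lemma eval_cUnpack a f w :
  eval_cmd cUnpack (init_regs (code [:: code [:: a; f]; w])) (layout a f w w 0 w).
Proof.
eapply EvalSeq; first by apply: eval_cMove; lia.
eapply EvalSeq; first by apply: (@eval_cUncons _ _ _ _ (code [:: a; f]) [:: w]); layout_side.
eapply EvalSeq; first by apply: (@eval_cUncons _ _ _ _ w [::]); layout_side.
eapply EvalSeq; first by apply: (@eval_cUncons _ _ _ _ a [:: f]); layout_side.
eapply EvalSeq; first by apply: (@eval_cUncons _ _ _ _ f [::]); layout_side.
eapply EvalSeq; first by apply: eval_cCopy; layout_side.
by apply: eval_cmd_eq; [apply: eval_cCopy; layout_side | layout_ext].
Qed.

Definition cChainStep := cSeq (cCopy 16 20) (cSeq (cUncons 20 17 18)
  (cSeq (cCopy 18 21) (cSeq (cPushEdge 16 17 18) (cMove 21 16)))).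

Lemma eval_cChainStep a f w y s l k :
  eval_cmd cChainStep (layout a f w (code (y :: s)) (code l) k)
    (layout a f w (code s) (code (code [:: code [:: code (y :: s); y]; code s] :: l)) k).
Proof.
eapply EvalSeq; first by apply: eval_cCopy; layout_side.
eapply EvalSeq; first by apply: (@eval_cUncons _ _ _ _ y s); layout_side.
eapply EvalSeq; first by apply: eval_cCopy; layout_side.
eapply EvalSeq; first by apply: eval_cPushEdge; layout_side.
by apply: eval_cmd_eq; [apply: eval_cMove; layout_side | layout_ext].
Qed.

Definition cChainBody := cIfz 16 cSkip (cSeq (cInc 16) cChainStep).

(* The counter [code xw] bounds the length of [xw]; once the word is read,
   the remaining rounds do nothing. *)
Lemma eval_chain_loop a f xw :
  eval_cmd (cLoop 19 cChainBody) (layout a f (code xw) (code xw) 0 (code xw))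
    (layout a f (code xw) 0 (code (map pickle (chain_edges xw [::]))) 0).
Proof.
pose inv k R := exists s acc, R = layout a f (code xw) (code s) (code (map pickle acc)) k /\
   size s <= k /\ chain_edges s acc = chain_edges xw [::].
have body k R : inv k.+1 R -> R 19 = k.+1 ->
    exists R', eval_cmd cChainBody (upd R 19 k) R' /\ inv k R' /\ R' 19 = k.
  move=> [s [acc [-> [size_s edges]]]] _.
  set Rk := layout a f (code xw) (code s) (code (map pickle acc)) k.
  have -> : upd (layout a f (code xw) (code s) (code (map pickle acc)) k.+1) 19 k = Rk.
    by apply: functional_extensionality => z; rewrite /upd /Rk /layout; case: eqP => // ->.
  case: s size_s edges @Rk => [|y s] size_s edges Rk.
    exists Rk; split; first exact: EvalIfz0 (EvalSkip _).
    by split=> //; exists [::], acc.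
  have cur_pos : 0 < code (y :: s) by rewrite code_cons muln_gt0 expn_gt0.
  eexists; split.
    apply: (@EvalIfzS _ _ _ _ (code (y :: s)).-1); first by rewrite /Rk /layout /= prednK.
    apply: EvalSeq (EvalInc _ _) _.
    have -> : upd (upd Rk 16 (code (y :: s)).-1) 16 (upd Rk 16 (code (y :: s)).-1 16).+1 = Rk.
      apply: functional_extensionality => z; rewrite /upd eqxx prednK //.
      by case: eqP => // ->.
    exact: eval_cChainStep.
  by split=> //; exists s, (((code (y :: s), y), code s) :: acc).
have init : inv (code xw) (layout a f (code xw) (code xw) 0 (code xw)).
  by exists xw, [::]; split=> //; split=> //; exact: size_le_code.
have [R' [eval_loop [s [acc [R'_eq [size_s edges]]]]]] := eval_loop_inv body init.
by case: s R'_eq size_s edges => // R'_eq _ /= edges; rewrite -edges -R'_eq.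
Qed.

Definition cPushLoops nn := cSeq (cCopy 12 16) (cSeq (cCopy 12 18) (cSeq (cIncBy 17 nn.+1)
  (cSeq (cPushEdge 16 17 18) (cSeq (cIncBy 17 nn) (cPushEdge 16 17 18))))).

Lemma eval_cPushLoops nn a f w l :
  eval_cmd (cPushLoops nn) (layout a f w 0 (code l) 0)
    (layout a f w 0 (code [:: code [:: code [:: 0; nn]; 0], code [:: code [:: w; nn.+1]; w] & l]) 0).
Proof.
eapply EvalSeq; first by apply: eval_cCopy; layout_side.
eapply EvalSeq; first by apply: eval_cCopy; layout_side.
eapply EvalSeq; first exact: eval_cIncBy.
eapply EvalSeq; first by apply: eval_cPushEdge; layout_side.
eapply EvalSeq; first exact: eval_cIncBy.
by apply: eval_cmd_eq; [apply: eval_cPushEdge; layout_side | layout_ext].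
Qed.

Definition cPack := cSeq (cInc 21) (cSeq (cPair 12 21 20) (cSeq (cPair 20 15 22)
  (cSeq (cPair 14 22 20) (cSeq (cPair 20 13 9) (cMove 9 0))))).

Lemma eval_cPack a f w acc : eval_cmd cPack (layout a f w 0 acc 0)
  (init_regs (code [:: code [:: f; code [:: code [:: w; code [:: 0]]; acc]]; a])).
Proof.
eapply EvalSeq; first exact: EvalInc.
eapply EvalSeq; first by apply: eval_cPair; layout_side.
eapply EvalSeq; first by apply: eval_cPair; layout_side.
eapply EvalSeq; first by apply: eval_cPair; layout_side.
eapply EvalSeq; first by apply: eval_cPair; layout_side.
by apply: eval_cmd_eq; [apply: eval_cMove; layout_side | layout_ext].
Qed.

Definition cReduction nn :=
  cSeq cUnpack (cSeq (cLoop 19 cChainBody) (cSeq (cPushLoops nn) cPack)).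

Lemma avoids_r1_cReduction nn : avoids_r1 (cReduction nn).
Proof. by rewrite /= !avoids_r1_cIncBy. Qed.

Lemma pickle_word (w : word) : pickle w = code w.
Proof. by rewrite /= /pickle_seq; congr code; elim: w => //= x w ->. Qed.

Lemma eval_cReduction nn x :
  eval_cmd (cReduction nn) (init_regs (pickle x)) (init_regs (pickle (GBrP_to_IP nn x))).
Proof.
case: x => [[A phiw] xw].
have -> : pickle (A, phiw, xw) = code [:: code [:: pickle A; pickle phiw]; code xw].
  by rewrite -[code xw]pickle_word.
apply: EvalSeq (eval_cUnpack _ _ _) _.
apply: EvalSeq (eval_chain_loop _ _ _) _.
apply: EvalSeq (eval_cPushLoops _ _ _ _ _) _.
exact: eval_cPack.
Qed.

Theorem proposition5p2 (T : Type) (G : group_str T) (gens : seq T) :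
  generates G gens ->
  IP_Rat_SD_decidable G gens -> GBrP_Rat_decidable G gens.
Proof.
(* The reduction does not need [gens] to generate [G]. *)
move=> _; apply: (decidable_on_reduction (avoids_r1_cReduction (2 * size gens))).
- by move=> x _; exact: eval_cReduction.
- exact: GBrP_to_IP_valid.
- exact: GBrP_to_IP_answer.
Qed.
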